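(* Consider the periodic robust learning MPC scheme described in the context, and suppose the following assumption holds: a closed-loop trajectory $\{\mathbf{z}^0,\mathbf{v}^0\}$ of iteration $0$ (with disturbance parameter $\theta^0$) is given which satisfies the nominal dynamics and the tightened constraints, and the feasible disturbance sets of iteration $0$ satisfy $\mathbb{W}_t^0 \supseteq \mathbb{W}_\theta$ for all $t\in\{0,\dots,T\}$. Then for every iteration $j\geq 1$ and every time step $t$ at which the LMPC problem is solved (i.e. every $t\in\{0,1,\dots,T-N\}$), the LMPC optimization problem at time $t$ of iteration $j$ is feasible.
   Context: Let $T\in\mathbb{N}$ be the period/task length and $N\le T$ the prediction horizon; $\mathbb{N}_a^b=\{a,a+1,\dots,b\}$. For $t\in\mathbb{N}_0^T$ let $A_t\in\mathbb{R}^{n\times n}$, $B_t\in\mathbb{R}^{n\times m}$, $C_t\in\mathbb{R}^{n\times d}$ be given, together with tightened constraint data $\bar F_t,\bar G_t,\bar f_t$ (polytopic constraints $\bar F_t z+\bar G_t v\le \bar f_t$), gains $K_t$ and $\Phi_t=A_t+B_tK_t$. Let $(\theta,t)\mapsto w_{\theta,t}\in\mathbb{R}^d$ be a given (known) parametrized disturbance profile (e.g. a truncated Fourier series $w_{\theta,t}=a_0+\sum_{q=1}^M a_q\sin(2\pi qt/T)+b_q\cos(2\pi qt/T)$ with $\theta=(a_0,a_q,b_q)_q$), with parameters $\theta$ ranging in a set $\mathbb{W}_\theta$. Each iteration $j=0,1,2,\dots$ has a parameter $\theta^j\in\mathbb{W}_\theta$, known at iteration $j$, and nominal dynamics $z_{k+1}=A_kz_k+B_kv_k+C_kw_{\theta^j,k}$,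 all iterations starting from $z_0^j=x_s$. Stage costs $l_t(z,v)$ are given. Shifting: for a past iteration $i$ with recorded closed-loop states $\mathbf{z}^i=[z_0^i,\dots,z_T^i]$, inputs $\mathbf{v}^i=[v_0^i,\dots,v_T^i]$ and parameter $\theta^i$, a parameter $\theta$ and a start time $t$, define $e_{t|t}=0$, $e_{k+1|t}=\Phi_k e_{k|t}+C_k(w_{\theta,k}-w_{\theta^i,k})$, $v_{k|t}=v_k^i+K_ke_{k|t}$, $z_{k|t}=z_k^i+e_{k|t}$ for $k\in\mathbb{N}_t^T$; when $\theta=\theta^j$ these are denoted $z_{k|t}^{i,j},v_{k|t}^{i,j}$. The feasible disturbance set $\mathbb{W}_t^i$ is the set of $\theta$ for which the resulting shifted pairs satisfy $\bar F_k z_{k|t}+\bar G_k v_{k|t}\le \bar f_k$ for all $k\in\mathbb{N}_t^T$. Safe sets and cost-to-go at iteration $j$: $\mathbb{SS}_k^j=\{z_{k|t}^{i,j}: i\in\mathbb{N}_0^{j-1},\ t\in\mathbb{N}_0^k,\ \theta^j\in\mathbb{W}_t^i\}$ (a finite set of points), shifted costs $J_{k|t}^{i,j}=\sum_{r=k}^T l_r(z_{r|t}^{i,j},v_{r|t}^{i,j})$, and $Q_k^j(z)=\min\{J_{k|t}^{i,j}: i\in\mathbb{N}_0^{j-1}, t\in\mathbb{N}_0^k, \theta^j\in\mathbb{W}_t^i, z_{k|t}^{i,j}=z\}$ if $z\in\mathbb{SS}_k^j$, and $Q_k^j(z)=+\infty$ otherwise. LMPC problem at time $t\in\mathbb{N}_0^{T-N}$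 of iteration $j$, given current nominal state $z_t^j$: minimize $\sum_{k=t}^{t+N-1}l_k(z_{k|t},v_{k|t})+Q_{t+N}^j(z_{t+N|t})$ over $v_{t|t},\dots,v_{t+N-1|t}$ subject to $z_{t|t}=z_t^j$, $z_{k+1|t}=A_kz_{k|t}+B_kv_{k|t}+C_kw_{\theta^j,k}$, $\bar F_kz_{k|t}+\bar G_kv_{k|t}\le\bar f_k$ for $k\in\mathbb{N}_t^{t+N-1}$, and $z_{t+N|t}\in\mathbb{SS}_{t+N}^j$. With optimal inputs $v^{j,*}_{k|t}$, the closed-loop input is $v_t^j=v_{t|t}^{j,*}$ if $t+N\le T$ and $v_t^j=v_{t|T-N}^{j,*}$ if $t+N>T$, and $z_{t+1}^j=A_tz_t^j+B_tv_t^j+C_tw_{\theta^j,t}$. The closed-loop $\{\mathbf{z}^j,\mathbf{v}^j\}$ together with $\theta^j$ is recorded and used as historical data for later iterations. *)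

From HB Require Import structures.
From mathcomp Require Import all_boot all_order all_algebra.
From mathcomp Require Import constructive_ereal.
Set Implicit Arguments. Unset Strict Implicit. Unset Printing Implicit Defensive.
Import Order.TTheory GRing.Theory Num.Theory.
Local Open Scope ring_scope.

(* Problem data: time-varying system, tightened constraints (q t rows at time t),
   feedback gains K_t, stage costs l_t and the parametrized disturbance profile. *)
Record PLMPC (R : realFieldType) (n m d : nat) (Theta : Type) := {
  Asys : nat -> 'M[R]_n;
  Bsys : nat -> 'M[R]_(n, m);
  Csys : nat -> 'M[R]_(n, d);
  Kgain : nat -> 'M[R]_(m, n);
  qrows : nat -> nat;
  Fbar : forall t, 'M[R]_(qrows t, n);
  Gbar : forall t, 'M[R]_(qrows t, m);
  fbar : forall t, 'cV[R]_(qrows t);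
  lcost : nat -> 'cV[R]_n -> 'cV[R]_m -> R;
  wprof : Theta -> nat -> 'cV[R]_d }.

Section Defs.
Variables (R : realFieldType) (n m d : nat) (Theta : Type).
Variable S : PLMPC R n m d Theta.

Definition Phi (t : nat) : 'M[R]_n := Asys S t + Bsys S t *m Kgain S t.

Definition dyn (th : Theta) (k : nat) (z : 'cV[R]_n) (v : 'cV[R]_m) : 'cV[R]_n :=
  Asys S k *m z + Bsys S k *m v + Csys S k *m wprof S th k.

Definition cons (k : nat) (z : 'cV[R]_n) (v : 'cV[R]_m) : bool :=
  [forall r : 'I_(qrows S k), (Fbar S k *m z + Gbar S k *m v) r 0 <= fbar S k r 0].

(* shifting error: shift_e th thi t s = e_{t+s|t} *)
Fixpoint shift_e (th thi : Theta) (t s : nat) : 'cV[R]_n :=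
  match s with
  | 0 => 0
  | s'.+1 => Phi (t + s') *m shift_e th thi t s'
             + Csys S (t + s') *m (wprof S th (t + s') - wprof S thi (t + s'))
  end.

(* shifted states / inputs z_{k|t}, v_{k|t} (meaningful for t <= k) of a past
   trajectory (zi, vi, thi) under parameter th *)
Definition zsh (zi : nat -> 'cV[R]_n) (thi th : Theta) (t k : nat) : 'cV[R]_n :=
  zi k + shift_e th thi t (k - t).
Definition vsh (vi : nat -> 'cV[R]_m) (thi th : Theta) (t k : nat) : 'cV[R]_m :=
  vi k + Kgain S k *m shift_e th thi t (k - t).

Definition inW (T : nat) (zi : nat -> 'cV[R]_n) (vi : nat -> 'cV[R]_m)
  (thi : Theta) (t : nat) (th : Theta) : bool :=
  [forall k : 'I_T.+1, (t <= k)%N ==>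
     cons k (zsh zi thi th t k) (vsh vi thi th t k)].

Variable T : nat.
Variables (zs : nat -> nat -> 'cV[R]_n) (vs : nat -> nat -> 'cV[R]_m)
  (ths : nat -> Theta).

Definition SS (j k : nat) (z : 'cV[R]_n) : Prop :=
  exists i t, (i < j)%N /\ (t <= k)%N /\ inW T (zs i) (vs i) (ths i) t (ths j)
              /\ z = zsh (zs i) (ths i) (ths j) t k.

Definition Jsh (j i t k : nat) : R :=
  \sum_(k <= r < T.+1)
     lcost S r (zsh (zs i) (ths i) (ths j) t r) (vsh (vs i) (ths i) (ths j) t r).

(* Q_k^j(z), equal to +oo when z \notin SS_k^j *)
Definition Qcost (j k : nat) (z : 'cV[R]_n) : \bar R :=
  \big[Order.min/+oo%E]_(i < j)
    \big[Order.min/+oo%E]_(t < k.+1 | inW T (zs i) (vs i) (ths i) t (ths j)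
                                       && (zsh (zs i) (ths i) (ths j) t k == z))
       (Jsh j i t k)%:E.

Variable N : nat.

(* predicted states of the LMPC problem: zpred j t x u s = z_{t+s|t},
   with u s = v_{t+s|t} *)
Fixpoint zpred (j t : nat) (x : 'cV[R]_n) (u : nat -> 'cV[R]_m) (s : nat)
  : 'cV[R]_n :=
  match s with
  | 0 => x
  | s'.+1 => dyn (ths j) (t + s') (zpred j t x u s') (u s')
  end.

Definition lmpc_feasible (j t : nat) (x : 'cV[R]_n) (u : nat -> 'cV[R]_m) : Prop :=
  (forall s, (s < N)%N -> cons (t + s) (zpred j t x u s) (u s))
  /\ SS j (t + N) (zpred j t x u N).

Definition lmpc_cost (j t : nat) (x : 'cV[R]_n) (u : nat -> 'cV[R]_m) : \bar R :=
  (\sum_(s < N) lcost S (t + s) (zpred j t x u s) (u s))%:E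
  + Qcost j (t + N) (zpred j t x u N).

Definition lmpc_optimal (j t : nat) (x : 'cV[R]_n) (u : nat -> 'cV[R]_m) : Prop :=
  lmpc_feasible j t x u /\
  forall u', lmpc_feasible j t x u' -> (lmpc_cost j t x u <= lmpc_cost j t x u')%E.

(* sol j t s = v^{j,*}_{t+s|t} *)
Variable sol : nat -> nat -> nat -> 'cV[R]_m.

Definition applied (j t : nat) : 'cV[R]_m :=
  if (t + N <= T)%N then sol j t 0 else sol j (T - N) (t - (T - N)).

Definition iteration_run (xs : 'cV[R]_n) (j : nat) : Prop :=
  zs j 0 = xs
  /\ (forall t, (t <= T - N)%N -> lmpc_optimal j t (zs j t) (sol j t))
  /\ (forall t, (t <= T)%N -> vs j t = applied j t)
  /\ (forall t, (t < T)%N -> zs j t.+1 = dyn (ths j) t (zs j t) (vs j t)).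

Definition iteration_run_upto (xs : 'cV[R]_n) (j tau : nat) : Prop :=
  zs j 0 = xs
  /\ (forall t, (t < tau)%N ->
        lmpc_optimal j t (zs j t) (sol j t)
        /\ vs j t = applied j t
        /\ zs j t.+1 = dyn (ths j) t (zs j t) (vs j t)).

Definition initial_assumption (xs : 'cV[R]_n) (Wth : Theta -> Prop) : Prop :=
  zs 0 0 = xs
  /\ (forall t, (t < T)%N -> zs 0 t.+1 = dyn (ths 0) t (zs 0 t) (vs 0 t))
  /\ (forall t, (t <= T)%N -> cons t (zs 0 t) (vs 0 t))
  /\ (forall t th, (t <= T)%N -> Wth th -> inW T (zs 0) (vs 0) (ths 0) t th).

End Defs.

(** Shifting a recorded trajectory [i] to the parameter [theta^j] yields a
    trajectory of the nominal dynamics for [theta^j], because the shifting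
    error [e] is exactly the deviation caused by the different disturbance,
    corrected by the feedback [K].  Whenever [theta^j] lies in [W_t^i], this
    shifted trajectory satisfies the tightened constraints, so its inputs are
    feasible for the LMPC problem at every later time; this settles [t = 0],
    where iteration 0 is shifted from its start.  For [t > 0] the usual
    recursive-feasibility argument applies: drop the first input of the
    optimal solution at [t - 1] and append the input of the shifted trajectory
    that reached the terminal safe-set point; one more step of that trajectory
    is again in the safe set. *)
From HB Require Import structures.
From mathcomp Require Import all_boot all_order all_algebra.
From mathcomp Require Import constructive_ereal.
Set Implicit Arguments. Unset Strict Implicit. Unset Printing Implicit Defensive.
Import GRing.Theory.
Local Open Scope ring_scope.

Section Shifting.
Variables (R : realFieldType) (n m d : nat) (Theta : Type).
Variable S : PLMPC R n m d Theta.
Variables (T : nat) (zi : nat -> 'cV[R]_n) (vi : nat -> 'cV[R]_m) (thi : Theta).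

Lemma zsh_start (th : Theta) (t : nat) : zsh S zi thi th t t = zi t.
Proof. by rewrite /zsh subnn addr0. Qed.

Lemma inW_cons (th : Theta) (t k : nat) :
  inW S T zi vi thi t th -> (t <= k)%N -> (k <= T)%N ->
  cons S k (zsh S zi thi th t k) (vsh S vi thi th t k).
Proof.
by move=> /forallP W tk kT; apply: (implyP (W (Ordinal (kT : k < T.+1)%N))).
Qed.

Hypothesis zi_dyn : forall k, (k < T)%N -> zi k.+1 = dyn S thi k (zi k) (vi k).

Lemma zsh_succ (th : Theta) (t k : nat) : (t <= k)%N -> (k < T)%N ->
  zsh S zi thi th t k.+1 = dyn S th k (zsh S zi thi th t k) (vsh S vi thi th t k).
Proof.
move=> tk kT; rewrite /zsh /vsh zi_dyn // subSn //= subnKC // /dyn /Phi.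
rewrite !mulmxDr !mulmxDl mulmxN !mulmxA.
by rewrite addrACA (addrCA (_ *m wprof _ thi _)) subrr addr0 addrACA.
Qed.

End Shifting.

Section Feasibility.
Variables (R : realFieldType) (n m d : nat) (Theta : Type).
Variable S : PLMPC R n m d Theta.
Variables (T N : nat) (zs : nat -> nat -> 'cV[R]_n) (vs : nat -> nat -> 'cV[R]_m).
Variable ths : nat -> Theta.

Local Notation zpred := (zpred S ths).
Local Notation lmpc_feasible := (lmpc_feasible S T zs vs ths N).

Lemma eq_zpred (j t : nat) (x : 'cV[R]_n) (u u' : nat -> 'cV[R]_m) (s : nat) :
  (forall r, (r < s)%N -> u r = u' r) -> zpred j t x u s = zpred j t x u' s.
Proof.
elim: s => [//|s IH] uu' /=.
by rewrite IH ?uu' // => r rs; apply: uu'; apply: ltnW.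
Qed.

Lemma zpred_succ (j t : nat) (x : 'cV[R]_n) (u : nat -> 'cV[R]_m) (s : nat) :
  zpred j t.+1 (dyn S (ths j) t x (u 0%N)) (fun r => u r.+1) s
  = zpred j t x u s.+1.
Proof. by elim: s => [|s /= ->]; rewrite /= ?addn0 ?addSnnS. Qed.

Variables i t' : nat.
Hypothesis zs_dyn : forall k, (k < T)%N -> zs i k.+1 = dyn S (ths i) k (zs i k) (vs i k).

Local Notation zsh_ij j := (zsh S (zs i) (ths i) (ths j) t').
Local Notation vsh_ij j := (vsh S (vs i) (ths i) (ths j) t').

Lemma zpred_zsh (j t s : nat) (u : nat -> 'cV[R]_m) :
  (t' <= t)%N -> (t + s <= T)%N ->
  (forall r, (r < s)%N -> u r = vsh_ij j (t + r)) ->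
  zpred j t (zsh_ij j t) u s = zsh_ij j (t + s).
Proof.
move=> t't; elim: s => [|s IH] tsT u_sh /=; first by rewrite addn0.
rewrite IH => [||r rs]; last by apply: u_sh; apply: ltnW.
- by rewrite u_sh // addnS (zsh_succ zs_dyn) // ?(leq_trans t't) ?leq_addr // -addnS.
- by apply: leq_trans tsT; rewrite leq_add2l.
Qed.

Lemma lmpc_feasible_zsh (j t : nat) :
  (i < j)%N -> (t' <= t)%N -> (t + N <= T)%N ->
  inW S T (zs i) (vs i) (ths i) t' (ths j) ->
  lmpc_feasible j t (zsh_ij j t) (fun s => vsh_ij j (t + s)).
Proof.
move=> ij t't tNT W.
have pred_sh s : (s <= N)%N ->
    zpred j t (zsh_ij j t) (fun s => vsh_ij j (t + s)) s = zsh_ij j (t + s).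
  by move=> sN; apply: zpred_zsh => //; apply: leq_trans tNT; rewrite leq_add2l.
split=> [s sN|].
  rewrite pred_sh; last exact: ltnW.
  apply: inW_cons W (leq_trans t't (leq_addr _ _)) _.
  by apply: leq_trans tNT; rewrite leq_add2l ltnW.
exists i, t'; split; first exact: ij.
split; first exact: leq_trans t't (leq_addr _ _).
by split; last rewrite pred_sh.
Qed.

Lemma lmpc_feasible_succ (j t : nat) (x : 'cV[R]_n) (u : nat -> 'cV[R]_m) :
  (0 < N)%N -> (t.+1 + N <= T)%N -> (i < j)%N ->
  (forall s, (s < N)%N -> cons S (t + s) (zpred j t x u s) (u s)) ->
  (t' <= t + N)%N -> inW S T (zs i) (vs i) (ths i) t' (ths j) ->
  zpred j t x u N = zsh_ij j (t + N) ->
  lmpc_feasible j t.+1 (dyn S (ths j) t x (u 0%N))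
    (fun r => if (r.+1 < N)%N then u r.+1 else vsh_ij j (t + r.+1)).
Proof.
move=> N0 tNT ij cons_u t'tN W pred_end.
pose ext r := if (r < N)%N then u r else vsh_ij j (t + r).
change (lmpc_feasible j t.+1 (dyn S (ths j) t x (u 0%N)) (fun r => ext r.+1)).
have ext0 : ext 0%N = u 0%N by rewrite /ext N0.
have pred_ext s : (s <= N)%N -> zpred j t x ext s = zpred j t x u s.
  by move=> sN; apply: eq_zpred => r rs; rewrite /ext (leq_trans rs sN).
have shifted s : zpred j t.+1 (dyn S (ths j) t x (u 0%N)) (fun r => ext r.+1) s
                 = zpred j t x ext s.+1.
  by rewrite -ext0 zpred_succ.
have tN_T : (t + N < T)%N by rewrite -addSn.
split=> [s sN|].
  rewrite shifted addSnnS pred_ext; last exact: sN.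
  move: sN; rewrite leq_eqVlt => /orP [/eqP sN_eq | sN'].
    rewrite sN_eq pred_end /ext ltnn; exact: inW_cons W t'tN (ltnW tN_T).
  by rewrite /ext sN'; apply: cons_u.
exists i, t'; split; first exact: ij.
split; first by rewrite addSn (leq_trans t'tN).
split; first exact: W.
rewrite shifted /= pred_ext ?leqnn // pred_end /ext ltnn.
by rewrite addSn -(zsh_succ zs_dyn).
Qed.

End Feasibility.

Theorem theorem1 (R : realFieldType) (n m d : nat) (Theta : Type)
  (S : PLMPC R n m d Theta) (Wth : Theta -> Prop) (T N : nat)
  (xs : 'cV[R]_n) (zs : nat -> nat -> 'cV[R]_n) (vs : nat -> nat -> 'cV[R]_m)
  (ths : nat -> Theta) (sol : nat -> nat -> nat -> 'cV[R]_m) :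
  (0 < N)%N -> (N <= T)%N ->
  (forall j, Wth (ths j)) ->
  initial_assumption S T zs vs ths xs Wth ->
  forall j t, (1 <= j)%N -> (t <= T - N)%N ->
    (forall i, (1 <= i < j)%N -> iteration_run S T zs vs ths N sol xs i) ->
    iteration_run_upto S T zs vs ths N sol xs j t ->
    exists u, lmpc_feasible S T zs vs ths N j t (zs j t) u.
Proof.
move=> N0 NT W_ths [zs00 [dyn0 [_ W0]]] j t j1 tTN run [zsj0 upto].
have tNT : (t + N <= T)%N by rewrite -(subnK NT) leq_add2r.
have dyn_past i : (i < j)%N ->
    forall k, (k < T)%N -> zs i k.+1 = dyn S (ths i) k (zs i k) (vs i k).
  case: i => [_|i ij]; first exact: dyn0.
  by have [_ [_ [_]]] := run i.+1 ij.
case: t tTN upto tNT => [|t] _ upto tNT.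
  rewrite zsj0 -zs00 -(zsh_start S (zs 0%N) (ths 0%N) (ths j) 0%N).
  exact: ex_intro _ _ (lmpc_feasible_zsh (dyn_past 0%N j1) j1 (leqnn 0%N) tNT
                        (W0 0%N _ (leq0n T) (W_ths j))).
have [[[cons_sol [i [t' [ij [t'tN [W end_sol]]]]]] _] [vsj zsj]] := upto t (ltnSn t).
have tN_T : (t + N <= T)%N by apply: leq_trans tNT; rewrite leq_add2r.
rewrite zsj vsj /applied tN_T.
exact: ex_intro _ _ (lmpc_feasible_succ (dyn_past i ij) N0 tNT ij cons_sol t'tN W end_sol).
Qed.
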